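(* Let $n$ be a positive integer with $n \equiv 1 \pmod{3}$. Then every $n \times n$ Latin square $L$ satisfies $$I(L) \ge \frac{4n(n-1)}{9},$$ where $$I(L) = \frac{1}{3} \sum_{0 \le r_1 < r_2 \le n-1} \left\lvert 3\, d(r_1,r_2) - n(n+1) \right\rvert$$ and $d(r_1,r_2) = \sum_{s=0}^{n-1} \lvert \mathrm{pos}(r_1,s) - \mathrm{pos}(r_2,s) \rvert$.
   Context: An $n \times n$ Latin square is an $n\times n$ array with entries in $\{0,\dots,n-1\}$ in which each symbol occurs exactly once in each row and exactly once in each column. Rows and columns are indexed by $\{0,\dots,n-1\}$. For a row $r$ and a symbol $s$, $\mathrm{pos}(r,s) \in \{0,\dots,n-1\}$ denotes the column in which symbol $s$ appears in row $r$. All absolute values are of ordinary integers; $I(L)$ is a rational number (the imbalance of $L$). *)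

From mathcomp Require Import all_boot all_order all_algebra.
Set Implicit Arguments. Unset Strict Implicit. Unset Printing Implicit Defensive.
Import Order.TTheory GRing.Theory Num.Theory.

(* An n x n array with entries in {0..n-1}: L r c is the symbol in row r, column c. *)
Definition latin_square (n : nat) (L : 'I_n -> 'I_n -> 'I_n) : Prop :=
  (forall r, injective (L r)) /\ (forall c, injective (fun r => L r c)).

(* pos L r s : the column in which symbol s appears in row r
   (default s if no such column, which cannot happen for a Latin square). *)
Definition pos (n : nat) (L : 'I_n -> 'I_n -> 'I_n) (r s : 'I_n) : 'I_n :=
  odflt s [pick c | L r c == s].

Definition dist_rows (n : nat) (L : 'I_n -> 'I_n -> 'I_n) (r1 r2 : 'I_n) : int :=
  \sum_(s < n) `| (pos L r1 s)%:Z - (pos L r2 s)%:Z |.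

Definition imbalance (n : nat) (L : 'I_n -> 'I_n -> 'I_n) : rat :=
  (1 / 3%:R) * \sum_(r1 < n) \sum_(r2 < n | (r1 < r2)%N)
     (`| 3%:Z * dist_rows L r1 r2 - (n * (n + 1))%:Z |)%:~R.

From mathcomp Require Import all_boot all_order all_algebra zify ring lra.
Import Order.TTheory GRing.Theory Num.Theory.

Set Implicit Arguments.
Unset Strict Implicit.
Local Open Scope ring_scope.

(* Put x(r1, r2) = 3 d(r1, r2) - n(n+1), so that I(L) = 1/3 sum_{r1<r2} |x(r1, r2)|.
   Since |a - b| = a + b (mod 2) and every row of pos is a permutation, each d is
   even; with n(n+1) = 2 (mod 6) this gives x = 4 (mod 6), hence 3|x| >= x + 8.
   Every column of pos is a permutation too, so sum_{r1,r2} d = n sum_{a,b<n} |a - b|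
   = n(n^3 - n)/3, which says exactly that the x(r1, r2) sum to 0 over the n(n-1)/2
   pairs r1 < r2.  Summing 3|x| >= x + 8 over these pairs gives
   3 sum |x| >= 4n(n-1). *)

Lemma sum_ord_natz n : (\sum_(i < n) (i : nat)%:Z) *+ 2 = n%:Z * (n%:Z - 1).
Proof. by elim: n => [|n IH]; rewrite ?big_ord0 // big_ord_recr mulrnDl IH /=; lia. Qed.

Lemma sum_ord_dist n :
  3 * \sum_(a < n) \sum_(b < n) `|(a : nat)%:Z - (b : nat)%:Z| = n%:Z ^+ 3 - n%:Z.
Proof.
elim: n => [|n IH]; first by rewrite big_ord0 mulr0.
have dist_last (i : 'I_n) : `|(i : nat)%:Z - n%:Z| = n%:Z - (i : nat)%:Z.
  by rewrite distrC gtr0_norm // subr_gt0 ltz_nat.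
rewrite big_ord_recr /= big_ord_recr /= subrr normr0 addr0.
under eq_bigr => a _ do rewrite big_ord_recr /= dist_last.
under [X in _ + X]eq_bigr => b _ do rewrite distrC dist_last.
rewrite big_split /= sumrB sumr_const card_ord.
move: IH (sum_ord_natz n).
set dist_sum := \sum_(_ < _) _; set id_sum := \sum_(_ < _) _.
by rewrite -mulr_natl natz; lia.
Qed.

Lemma sum_ord_sym (V : nmodType) n (h : 'I_n -> 'I_n -> V) :
  (forall i j, h i j = h j i) ->
  \sum_(i < n) \sum_(j < n) h i j =
    \sum_(i < n) h i i + (\sum_(i < n) \sum_(j < n | (i < j)%N) h i j) *+ 2.
Proof.
move=> h_sym.
have split_row (i : 'I_n) : \sum_j h i j =
    h i i + (\sum_(j < n | (i < j)%N) h i j + \sum_(j < n | (j < i)%N) h i j).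
  rewrite (bigD1 i) // (bigID (fun j : 'I_n => (i < j)%N)) /=.
  by congr (_ + (_ + _)); apply: eq_bigl => j; rewrite -val_eqE /=; case: ltngtP.
have lower : \sum_(i < n) \sum_(j < n | (j < i)%N) h i j =
              \sum_(i < n) \sum_(j < n | (i < j)%N) h i j.
  rewrite (exchange_big_dep xpredT) //=.
  by apply: eq_bigr => i _; apply: eq_bigr => j _; rewrite h_sym.
by rewrite (eq_bigr _ (fun i _ => split_row i)) !big_split /= lower mulr2n.
Qed.

Lemma sum_ord_lt_const (V : nmodType) n (c : V) :
  (\sum_(i < n) \sum_(j < n | (i < j)%N) c) *+ 2 + c *+ n = c *+ (n * n).
Proof.
have := @sum_ord_sym V n (fun _ _ => c) (fun _ _ => erefl).
by rewrite !sumr_const card_ord -mulrnA addrC => <-.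
Qed.

Lemma sum_dist_perm_even n (sigma tau : 'I_n -> 'I_n) :
  injective sigma -> injective tau ->
  (2 %| \sum_s `|(sigma s : nat)%:Z - (tau s : nat)%:Z|)%Z.
Proof.
move=> sigma_inj tau_inj.
have sum_perm (rho : 'I_n -> 'I_n) : injective rho ->
    \sum_s (rho s : nat)%:Z = \sum_(s < n) (s : nat)%:Z.
  by move=> rho_inj; rewrite [RHS](reindex_inj rho_inj).
have distE (a b : nat) : `|a%:Z - b%:Z| = a%:Z + b%:Z - 2 * (minn a b)%:Z.
  by case: (leqP a b); lia.
rewrite (eq_bigr _ (fun s _ => distE _ _)) sumrB big_split /= !sum_perm //.
rewrite -mulr_sumr; apply/dvdzP.
exists (\sum_(s < n) (s : nat)%:Z - \sum_s (minn (sigma s) (tau s))%:Z); ring.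
Qed.

Section LatinSquare.
Variables (n : nat) (L : 'I_n -> 'I_n -> 'I_n).

Lemma dist_rows_sym r1 r2 : dist_rows L r1 r2 = dist_rows L r2 r1.
Proof. by apply: eq_bigr => s _; rewrite distrC. Qed.

Lemma dist_rows_diag r : dist_rows L r r = 0.
Proof. by rewrite /dist_rows big1 // => s _; rewrite subrr normr0. Qed.

Hypothesis L_latin : latin_square L.

Lemma posK r : cancel (pos L r) (L r).
Proof.
move=> s; have /codomP[c ->] := injF_onto (L_latin.1 r) s.
rewrite /pos; case: pickP => [c' /eqP // | no_c].
by have := no_c c; rewrite /= eqxx.
Qed.

Lemma pos_inj r : injective (pos L r).
Proof. exact: can_inj (posK r). Qed.

Lemma pos_col_inj s : injective (pos L ^~ s).
Proof.
move=> r1 r2 /= pos_eq; apply: (L_latin.2 (pos L r1 s)) => /=.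
by rewrite {2}pos_eq !posK.
Qed.

Lemma dist_rows_even r1 r2 : (2 %| dist_rows L r1 r2)%Z.
Proof. exact: sum_dist_perm_even (@pos_inj r1) (@pos_inj r2). Qed.

Lemma sum_dist_rows :
  3 * \sum_r1 \sum_r2 dist_rows L r1 r2 = n%:Z * (n%:Z ^+ 3 - n%:Z).
Proof.
have column s : \sum_r1 \sum_r2 `|(pos L r1 s : nat)%:Z - (pos L r2 s : nat)%:Z|
    = \sum_(a < n) \sum_(b < n) `|(a : nat)%:Z - (b : nat)%:Z|.
  rewrite [RHS](reindex_inj (@pos_col_inj s)); apply: eq_bigr => r1 _.
  by rewrite [RHS](reindex_inj (@pos_col_inj s)).
rewrite /dist_rows; under eq_bigr do rewrite exchange_big.
rewrite exchange_big (eq_bigr _ (fun s _ => column s)) sumr_const card_ord.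
by rewrite mulrnAr sum_ord_dist -mulr_natl natz.
Qed.

End LatinSquare.

Lemma mul_succ_mod6 n : n = 1 %[mod 3] -> (n * (n + 1) = 2 %[mod 6])%N.
Proof.
move=> n_mod3; set q := (n %/ 3)%N.
have n_eq : n = (3 * q + 1)%N by rewrite {1}(divn_eq n 3) n_mod3; lia.
have [m q_even] : exists m, (q * q.+1 = 2 * m)%N.
  exists (q * q.+1)./2; rewrite mul2n -[LHS]odd_double_half.
  by rewrite oddM /= andbN.
rewrite n_eq; lia.
Qed.

Lemma le_norm_4mod6 (x : int) : (x = 4 %[mod 6])%Z -> 8 + x <= 3 * `|x|.
Proof. lia. Qed.

Lemma sum2_le_norm_of_sum2_eq0 (R : realDomainType) (I J : finType) (Q : I -> pred J)
    (x : I -> J -> R) (c k : R) :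
  \sum_i \sum_(j | Q i j) x i j = 0 ->
  (forall i j, Q i j -> c + x i j <= k * `|x i j|) ->
  \sum_i \sum_(j | Q i j) c <= k * \sum_i \sum_(j | Q i j) `|x i j|.
Proof.
move=> x_sum0 x_bound; rewrite -[leLHS]addr0 -[X in _ + X]x_sum0 -big_split mulr_sumr.
apply: ler_sum => i _; rewrite -big_split mulr_sumr.
by apply: ler_sum => j; apply: x_bound.
Qed.

Definition imbalance_term {n} (L : 'I_n -> 'I_n -> 'I_n) r1 r2 : int :=
  3 * dist_rows L r1 r2 - (n * (n + 1))%:Z.

Lemma imbalanceE n (L : 'I_n -> 'I_n -> 'I_n) :
  imbalance L = 3^-1 * (\sum_(r1 < n) \sum_(r2 < n | (r1 < r2)%N) `|imbalance_term L r1 r2|)%:~R.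
Proof.
rewrite /imbalance div1r rmorph_sum; congr (_ * _); apply: eq_bigr => r1 _.
by rewrite rmorph_sum.
Qed.

Section Imbalance.
Variables (n : nat) (L : 'I_n -> 'I_n -> 'I_n).
Hypotheses (L_latin : latin_square L) (n_mod3 : n = 1 %[mod 3]).

Lemma imbalance_term_mod6 r1 r2 : (imbalance_term L r1 r2 = 4 %[mod 6])%Z.
Proof.
rewrite /imbalance_term; have /dvdzP[e ->] := dist_rows_even L_latin r1 r2.
by have := mul_succ_mod6 n_mod3; lia.
Qed.

Lemma sum_upper_imbalance_term :
  \sum_(r1 < n) \sum_(r2 < n | (r1 < r2)%N) imbalance_term L r1 r2 = 0.
Proof.
have dists := sum_ord_sym (dist_rows_sym L).
have diag0 : \sum_(r < n) dist_rows L r r = 0 by apply: big1 => r _; apply: dist_rows_diag.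
rewrite diag0 add0r in dists.
have dist6 := sum_dist_rows L_latin; rewrite dists in dist6.
have consts := sum_ord_lt_const n (n * (n + 1))%:Z.
rewrite /imbalance_term; under eq_bigr do rewrite sumrB -mulr_sumr.
rewrite sumrB -mulr_sumr; move: consts dist6.
set const_sum := \sum_(_ < _) _; set dist_sum := \sum_(_ < _) _.
by lia.
Qed.

End Imbalance.

Theorem theorem3 (n : nat) (L : 'I_n -> 'I_n -> 'I_n) :
  (0 < n)%N -> n = 1 %[mod 3] -> latin_square L ->
  (4 * n * (n - 1))%:R / 9%:R <= imbalance L.
Proof.
move=> _ n_mod3 L_latin.
have := sum2_le_norm_of_sum2_eq0 (sum_upper_imbalance_term L_latin n_mod3)
  (fun r1 r2 _ => le_norm_4mod6 (imbalance_term_mod6 L_latin n_mod3 r1 r2)).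
rewrite imbalanceE; move: (sum_ord_lt_const n (8 : int)).
set pairs8 := \sum_(_ < _) _; set abs_sum := \sum_(_ < _) _ => pairs8E abs_sum_ge.
have : (4 * n * (n - 1))%:Z <= 3 * abs_sum by lia.
rewrite -(ler_int rat) pmulrn intrM; lra.
Qed.
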